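(* The growth function $g_M:\mathbb{N}_+\to\mathbb{N}$ of every multiway system $M$ is primitive recursive.
   Context: A (string-based) multiway system is a triple $M=(R,s_{\text{init}},\Sigma)$ with $\Sigma$ a finite alphabet, $R$ a finite set of string replacement rules $r\to t$ ($r,t\in\Sigma^*$), and $s_{\text{init}}\in\Sigma^*$. Its states graph has as vertices the strings reachable from $s_{\text{init}}$, with an edge $u\to v$ whenever $v$ arises from $u$ by replacing one occurrence of some rule's left side by its right side. The growth function $g_M(n)$ is the number of states whose shortest-path distance from $s_{\text{init}}$ equals $n-1$ (i.e. the number of new states first appearing in generation $n$). *)

From mathcomp Require Import all_boot.
Set Implicit Arguments. Unset Strict Implicit. Unset Printing Implicit Defensive.

Definition vcons k (a : nat) (x : 'I_k -> nat) : 'I_k.+1 -> nat :=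
  fun i => match unlift ord0 i with Some j => x j | None => a end.

Definition vtail k (v : 'I_k.+1 -> nat) : 'I_k -> nat :=
  fun i => v (lift ord0 i).

(* primitive recursion: f(0, x) = g x, f(n+1, x) = h(n, f(n, x), x) *)
Definition prec k (g : ('I_k -> nat) -> nat) (h : ('I_k.+2 -> nat) -> nat)
  (v : 'I_k.+1 -> nat) : nat :=
  nat_rec (fun _ => nat) (g (vtail v))
    (fun n acc => h (vcons n (vcons acc (vtail v)))) (v ord0).

Inductive PR : forall k : nat, (('I_k -> nat) -> nat) -> Prop :=
| PR_zero : PR (fun _ : 'I_0 -> nat => 0)
| PR_succ : PR (fun v : 'I_1 -> nat => (v ord0).+1)
| PR_proj k (i : 'I_k) : PR (fun v : 'I_k -> nat => v i)
| PR_comp k m (g : ('I_m -> nat) -> nat) (hs : 'I_m -> ('I_k -> nat) -> nat) :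
    PR g -> (forall j, PR (hs j)) ->
    PR (fun v : 'I_k -> nat => g (fun j => hs j v))
| PR_rec k (g : ('I_k -> nat) -> nat) (h : ('I_k.+2 -> nat) -> nat) :
    PR g -> PR h -> PR (prec g h).

Definition prim_rec1 (f : nat -> nat) : Prop :=
  exists F : ('I_1 -> nat) -> nat, PR F /\ forall n, F (fun _ => n) = f n.

Section Multiway.
Variable Sigma : finType.
Variable R : seq (seq Sigma * seq Sigma).
Variable s_init : seq Sigma.

Definition mw_step (u v : seq Sigma) : Prop :=
  exists r t x y, (r, t) \in R /\ u = x ++ r ++ y /\ v = x ++ t ++ y.

Fixpoint reach_in (n : nat) (w : seq Sigma) : Prop :=
  match n with
  | 0 => w = s_init
  | n'.+1 => exists u, reach_in n' u /\ mw_step u w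
  end.

Definition at_distance (d : nat) (w : seq Sigma) : Prop :=
  reach_in d w /\ forall d', d' < d -> ~ reach_in d' w.

Definition growth_is (n c : nat) : Prop :=
  exists l : seq (seq Sigma),
    [/\ uniq l, (forall w, w \in l <-> at_distance n.-1 w) & size l = c].

End Multiway.

From mathcomp Require Import all_boot zify.
From Stdlib Require Import FunctionalExtensionality.
Set Implicit Arguments. Unset Strict Implicit. Unset Printing Implicit Defensive.

(* Strings over Sigma are coded by bijective base-#|Sigma| numerals, and finite
   sets of codes by bitmasks.  A rewriting step lengthens a string by at most the
   longest right-hand side, so all states reachable in d steps have codes below
   an explicit bound; hence the bitmask of the states reachable in exactly d
   steps is computed by primitive recursion on d, each step being a bounded
   search for the decomposition u = x r y, and g(n) counts the codes that lie
   in the (n-1)-th mask but in no earlier one.  Primitive recursiveness is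
   obtained through a small language of terms (variables, zero, successor,
   iteration), every term of which denotes a primitive recursive function. *)

Lemma PR_ext k (f g : ('I_k -> nat) -> nat) : PR f -> f =1 g -> PR g.
Proof. by move=> Pf /functional_extensionality <-. Qed.

Lemma vcons0 k a (x : 'I_k -> nat) : vcons a x ord0 = a.
Proof. by rewrite /vcons unlift_none. Qed.

Lemma vconsS k a (x : 'I_k -> nat) i : vcons a x (lift ord0 i) = x i.
Proof. by rewrite /vcons liftK. Qed.

Lemma vtail_vcons k a (x : 'I_k -> nat) : vtail (vcons a x) = x.
Proof. by apply: functional_extensionality => i; rewrite /vtail vconsS. Qed.

Lemma PR_const0 k : PR (fun _ : 'I_k -> nat => 0).
Proof. by apply: (@PR_comp k 0 (fun _ => 0) (fun _ _ => 0)); [exact: PR_zero | case]. Qed.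

Inductive expr : Type :=
| EVar of nat
| EZero
| ESucc of expr
| EIter of expr & expr & expr.

Definition scons (a : nat) (env : nat -> nat) : nat -> nat :=
  fun i => if i is i'.+1 then env i' else a.

Definition tail (env : nat -> nat) : nat -> nat := fun i => env i.+1.

(* In [EIter n z s], the body [s] sees the counter as variable 0 and the
   accumulator as variable 1. *)
Fixpoint eval (env : nat -> nat) (e : expr) : nat :=
  match e with
  | EVar i => env i
  | EZero => 0
  | ESucc a => (eval env a).+1
  | EIter n z s =>
      iteri (eval env n) (fun j acc => eval (scons j (scons acc env)) s) (eval env z)
  end.

Definition ext k (v : 'I_k -> nat) : nat -> nat :=
  fun i => if insub i is Some j then v j else 0.

Lemma ext_vcons k a (v : 'I_k -> nat) : ext (vcons a v) = scons a (ext v).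
Proof.
apply: functional_extensionality => -[|i] /=.
  by rewrite /ext insubT //= -[RHS](vcons0 a v); congr vcons; apply: val_inj.
rewrite /ext; case: (ltnP i k) => [lt_ik | le_ki].
  rewrite (insubT (fun j => j < k.+1) (lt_ik : i.+1 < k.+1)) insubT /=.
  by rewrite -(vconsS a v); congr vcons; apply: val_inj.
by rewrite !insubF // ltnNge ?ltnS le_ki.
Qed.

Lemma PR_eval e k : PR (fun v : 'I_k -> nat => eval (ext v) e).
Proof.
elim: e k => [i | | a IHa | n IHn z IHz s IHs] k /=.
- case: (ltnP i k) => [lt_ik | le_ki].
    apply: PR_ext (PR_proj (Ordinal lt_ik)) _ => v.
    by rewrite /ext insubT /=; congr v; apply: val_inj.
  apply: PR_ext (PR_const0 k) _ => v.
  by rewrite /ext insubF // ltnNge le_ki.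
- exact: PR_const0.
- exact: (@PR_comp k 1 _ (fun _ => _) PR_succ (fun _ => IHa k)).
- have Pvcons j : PR (fun v : 'I_k -> nat => vcons (eval (ext v) n) v j).
    by rewrite /vcons; case: (unlift ord0 j) => [i|]; [exact: PR_proj | exact: IHn].
  apply: PR_ext (PR_comp (PR_rec (IHz k) (IHs k.+2)) Pvcons) _ => v.
  rewrite /prec vtail_vcons vcons0.
  by elim: (eval (ext v) n) => //= j ->; rewrite !ext_vcons.
Qed.

Definition upren (sigma : nat -> nat) : nat -> nat :=
  fun i => if i is i'.+1 then (sigma i').+1 else 0.

Fixpoint ren (sigma : nat -> nat) (e : expr) : expr :=
  match e with
  | EVar i => EVar (sigma i)
  | EZero => EZero
  | ESucc a => ESucc (ren sigma a)
  | EIter n z s => EIter (ren sigma n) (ren sigma z) (ren (upren (upren sigma)) s)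
  end.

Lemma eval_ren e sigma env : eval env (ren sigma e) = eval (env \o sigma) e.
Proof.
elim: e sigma env => [i | | a IHa | n IHn z IHz s IHs] sigma env //=; first by rewrite IHa.
rewrite IHn IHz; apply: eq_iteri => j acc; rewrite IHs; congr eval.
by apply: functional_extensionality => -[|[|i]].
Qed.

Definition expressible (f : (nat -> nat) -> nat) : Prop :=
  exists e, forall env, eval env e = f env.

Lemma PR_expressible f k : expressible f -> PR (fun v : 'I_k -> nat => f (ext v)).
Proof. by move=> [e Ee]; apply: PR_ext (PR_eval e k) _ => v. Qed.

Lemma expressible_ext f g : expressible f -> f =1 g -> expressible g.
Proof. by move=> [e Ee] fg; exists e => env; rewrite Ee fg. Qed.

Lemma expressible_var i : expressible (fun env => env i).
Proof. by exists (EVar i). Qed.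

Lemma expressible_succ f : expressible f -> expressible (fun env => (f env).+1).
Proof. by move=> [e Ee]; exists (ESucc e) => env /=; rewrite Ee. Qed.

Lemma expressible_iter n z (s : nat -> nat -> (nat -> nat) -> nat) :
  expressible n -> expressible z ->
  expressible (fun env => s (env 0) (env 1) (tail (tail env))) ->
  expressible (fun env => iteri (n env) (fun j acc => s j acc env) (z env)).
Proof.
move=> [en En] [ez Ez] [es Es]; exists (EIter en ez es) => env /=.
by rewrite En Ez; apply: eq_iteri => j acc; rewrite Es.
Qed.

Lemma expressible_comp f (sigma : nat -> nat) :
  expressible f -> expressible (fun env => f (env \o sigma)).
Proof. by move=> [e Ee]; exists (ren sigma e) => env; rewrite eval_ren. Qed.

Lemma expressible_tail f : expressible f -> expressible (fun env => f (tail env)).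
Proof. exact: expressible_comp. Qed.

Lemma expressible_cst c : expressible (fun=> c).
Proof. by elim: c => [|c]; [exists EZero | exact: expressible_succ]. Qed.

Lemma expressible_add f g :
  expressible f -> expressible g -> expressible (fun env => f env + g env).
Proof.
move=> Ef Eg; have Esucc := expressible_succ (expressible_var 1).
apply: expressible_ext (expressible_iter (s := fun _ acc _ => acc.+1) Eg Ef Esucc) _.
by move=> env /=; elim: (g env) => [|n /= ->]; rewrite ?addn0 ?addnS.
Qed.

Lemma expressible_pred f : expressible f -> expressible (fun env => (f env).-1).
Proof.
move=> Ef; have Eidx := expressible_var 0.
apply: expressible_ext (expressible_iter (s := fun j _ _ => j) Ef (expressible_cst 0) Eidx) _.
by move=> env /=; case: (f env).
Qed.

Lemma expressible_sub f g :
  expressible f -> expressible g -> expressible (fun env => f env - g env).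
Proof.
move=> Ef Eg; have Epred := expressible_pred (expressible_var 1).
apply: expressible_ext (expressible_iter (s := fun _ acc _ => acc.-1) Eg Ef Epred) _.
by move=> env /=; elim: (g env) => [|n /= ->]; rewrite ?subn0 ?subnS.
Qed.

Lemma expressible_mul f g :
  expressible f -> expressible g -> expressible (fun env => f env * g env).
Proof.
move=> Ef Eg.
have Ebody := expressible_add (expressible_var 1) (expressible_tail (expressible_tail Ef)).
apply: expressible_ext (expressible_iter (s := fun _ acc e => acc + f e) Eg
  (expressible_cst 0) Ebody) _.
by move=> env /=; elim: (g env) => [|n /= ->]; rewrite ?muln0 ?mulnS 1?addnC.
Qed.

Lemma expressible_exp f g :
  expressible f -> expressible g -> expressible (fun env => f env ^ g env).
Proof.
move=> Ef Eg.
have Ebody := expressible_mul (expressible_var 1) (expressible_tail (expressible_tail Ef)).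
apply: expressible_ext (expressible_iter (s := fun _ acc e => acc * f e) Eg
  (expressible_cst 1) Ebody) _.
by move=> env /=; elim: (g env) => [|n /= ->]; rewrite ?expnS 1?mulnC.
Qed.

Lemma expressible_sum n (F : nat -> (nat -> nat) -> nat) :
  expressible n -> expressible (fun env => F (env 0) (tail env)) ->
  expressible (fun env => \sum_(0 <= i < n env) F i env).
Proof.
(* The renaming skips variable 1, the accumulator of the iteration. *)
move=> En EF; have EF2 := expressible_comp (fun i => if i is 0 then 0 else i.+1) EF.
have Ebody := expressible_add (expressible_var 1) EF2.
apply: expressible_ext (expressible_iter (s := fun j acc e => acc + F j e) En
  (expressible_cst 0) Ebody) _ => env.
elim: (n env) => [|m IH]; first by rewrite big_geq.
by rewrite big_nat_recr // -IH.
Qed.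

Lemma expressible_leq f g :
  expressible f -> expressible g -> expressible (fun env => f env <= g env).
Proof.
move=> Ef Eg; have Ediff := expressible_sub (expressible_cst 1) (expressible_sub Ef Eg).
by apply: expressible_ext Ediff _ => env /=; rewrite -subn_eq0; case: (f env - g env).
Qed.

Lemma expressible_andb (P Q : (nat -> nat) -> bool) :
  expressible P -> expressible Q -> expressible (fun env => P env && Q env).
Proof.
by move=> EP EQ; apply: expressible_ext (expressible_mul EP EQ) _ => env; rewrite mulnb.
Qed.

Lemma expressible_negb (P : (nat -> nat) -> bool) :
  expressible P -> expressible (fun env => ~~ P env).
Proof.
move=> EP; apply: expressible_ext (expressible_sub (expressible_cst 1) EP) _ => env.
by case: (P env).
Qed.

Lemma expressible_orb (P Q : (nat -> nat) -> bool) :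
  expressible P -> expressible Q -> expressible (fun env => P env || Q env).
Proof.
move=> EP EQ; have := expressible_andb (expressible_negb EP) (expressible_negb EQ).
by move/expressible_negb/expressible_ext; apply=> env; rewrite negb_and !negbK.
Qed.

Lemma expressible_eq f g :
  expressible f -> expressible g -> expressible (fun env => f env == g env).
Proof.
move=> Ef Eg; have := expressible_andb (expressible_leq Ef Eg) (expressible_leq Eg Ef).
by move/expressible_ext; apply=> env; rewrite eqn_leq.
Qed.

Lemma expressible_has_iota n (P : nat -> (nat -> nat) -> bool) :
  expressible n -> expressible (fun env => P (env 0) (tail env)) ->
  expressible (fun env => has (P^~ env) (iota 0 (n env))).
Proof.
move=> En EP; have Esum := expressible_sum (F := fun i env => P i env) En EP.
apply: expressible_ext (expressible_leq (expressible_cst 1) Esum) _ => env /=.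
by congr (nat_of_bool _); rewrite has_count -sum1_count [in RHS]big_mkcond /index_iota subn0.
Qed.

Lemma expressible_has (T : eqType) (s : seq T) (P : T -> (nat -> nat) -> bool) :
  (forall x, x \in s -> expressible (P x)) ->
  expressible (fun env => has (P^~ env) s).
Proof.
elim: s => [|x s IH] EP /=; first exact: expressible_cst.
apply: expressible_orb; first by apply: EP; rewrite mem_head.
by apply: IH => y sy; apply: EP; rewrite in_cons sy orbT.
Qed.

Lemma sum_ltn n c : c <= n -> \sum_(i < n) (i < c) = c.
Proof.
move=> le_cn; rewrite -big_mkcond /= -(big_ord_widen _ (fun=> 1)) //.
by rewrite sum1_card card_ord.
Qed.

Lemma expressible_div f g :
  (forall env, 0 < g env) -> expressible f -> expressible g ->
  expressible (fun env => f env %/ g env).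
Proof.
move=> g_gt0 Ef Eg.
have Ebody := expressible_leq (expressible_mul (expressible_succ (expressible_var 0))
  (expressible_tail Eg)) (expressible_tail Ef).
have Esum := expressible_sum (F := fun i env => i.+1 * g env <= f env) Ef Ebody.
apply: expressible_ext Esum _.
move=> env /=; rewrite big_mkord; under eq_bigr => i _ do rewrite -leq_divRL //.
exact/sum_ltn/leq_div.
Qed.

Lemma expressible_odd f : expressible f -> expressible (fun env => odd (f env)).
Proof.
move=> Ef; have Ebody := expressible_sub (expressible_cst 1) (expressible_var 1).
apply: expressible_ext (expressible_iter (s := fun _ acc _ => 1 - acc) Ef
  (expressible_cst 0) Ebody) _.
by move=> env /=; elim: (f env) => //= n ->; case: (odd n).
Qed.

Definition bit (M u : nat) : bool := odd (M %/ 2 ^ u).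

Definition bitmask (C : nat) (P : pred nat) : nat := \sum_(0 <= w < C) P w * 2 ^ w.

Lemma bitmaskS C P : bitmask C.+1 P = P 0 + 2 * bitmask C (fun w => P w.+1).
Proof.
rewrite /bitmask big_nat_recl // muln1 big_distrr; congr (_ + _).
by apply: eq_bigr => i _; rewrite expnS mulnCA.
Qed.

Lemma bit_bitmask C P u : bit (bitmask C P) u = (u < C) && P u.
Proof.
rewrite /bit; elim: C P u => [|C IH] P u; first by rewrite /bitmask big_geq // div0n.
rewrite bitmaskS; case: u => [|u].
  by rewrite divn1 oddD oddM /= addbF; case: (P 0).
have P0_lt2 : P 0 < 2 by case: (P 0).
by rewrite expnS divnMA addnC [2 * _]mulnC divnMDl // (divn_small P0_lt2) addn0 IH.
Qed.

Lemma expressible_bit M u :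
  expressible M -> expressible u -> expressible (fun env => bit (M env) (u env)).
Proof.
move=> EM Eu; apply: expressible_odd; apply: expressible_div EM _.
  by move=> env; rewrite expn_gt0.
exact: expressible_exp (expressible_cst 2) Eu.
Qed.

Lemma expressible_bitmask C (P : nat -> (nat -> nat) -> bool) :
  expressible C -> expressible (fun env => P (env 0) (tail env)) ->
  expressible (fun env => bitmask (C env) (P^~ env)).
Proof.
move=> EC EP; apply: (expressible_sum (F := fun w env => P w env * 2 ^ w) EC).
exact: expressible_mul EP (expressible_exp (expressible_cst 2) (expressible_var 0)).
Qed.

Definition repunit (A l : nat) : nat := \sum_(0 <= i < l) A ^ i.

Lemma repunitS A l : repunit A l.+1 = 1 + A * repunit A l.
Proof.
rewrite /repunit big_nat_recl // big_distrr; congr (_ + _).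
by apply: eq_bigr => i _; rewrite expnS.
Qed.

Lemma leq_repunit A l l' : l <= l' -> repunit A l <= repunit A l'.
Proof. by move=> le_ll'; rewrite /repunit (big_cat_nat (leq0n l) le_ll') leq_addr. Qed.

Lemma repunit_window_cons A r e l :
  r < A -> repunit A l <= e < repunit A l.+1 ->
  repunit A l.+1 <= r.+1 + A * e < repunit A l.+2.
Proof.
rewrite !repunitS; move: (repunit A l) => R lt_rA /andP[le_Re lt_eR].
have le_e : A * R <= A * e by rewrite leq_mul2l le_Re orbT.
have e_le : A * e <= A * (A * R) by rewrite leq_mul2l -ltnS -add1n lt_eR orbT.
by rewrite mulnDr muln1; apply/andP; split; lia.
Qed.

Lemma expressible_repunit A l : expressible l -> expressible (fun env => repunit A (l env)).
Proof.
move=> El; apply: (expressible_sum (F := fun i _ => A ^ i) El).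
exact: expressible_exp (expressible_cst A) (expressible_var 0).
Qed.

Ltac expressible_closure :=
  repeat first
    [ assumption | apply: expressible_cst | apply: expressible_var
    | apply: expressible_andb | apply: expressible_negb
    | apply: expressible_leq | apply: expressible_eq
    | apply: expressible_succ | apply: expressible_add
    | apply: expressible_mul | apply: expressible_exp
    | apply: expressible_bit | apply: expressible_repunit ].

Lemma digits_inj d r1 r2 q1 q2 :
  r1 < d -> r2 < d -> r1 + d * q1 = r2 + d * q2 -> r1 = r2 /\ q1 = q2.
Proof.
move=> lt_r1 lt_r2 eq_rq; have d_gt0 : 0 < d := leq_ltn_trans (leq0n r1) lt_r1.
have := congr1 (divn^~ d) eq_rq; have := congr1 (modn^~ d) eq_rq.
rewrite /= ![d * _]mulnC ![_ + _ * d]addnC !modnMDl !divnMDl // !modn_small // !divn_small //.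
by rewrite !addn0 => -> ->.
Qed.

Section Encoding.
Variable Sigma : finType.
Local Notation A := #|Sigma|.

(* Bijective base-#|Sigma| numeration, with digits 1..#|Sigma|: every number
   below a code is again a code ([enc_onto]), and the codes of the strings of
   length l fill the window [repunit A l, repunit A l.+1). *)
Fixpoint enc (s : seq Sigma) : nat :=
  if s is a :: s' then (enum_rank a).+1 + A * enc s' else 0.

Lemma enc_cat s1 s2 : enc (s1 ++ s2) = enc s1 + A ^ size s1 * enc s2.
Proof.
elim: s1 => [|a s1 IH] /=; first by rewrite mul1n.
by rewrite IH expnS mulnDr mulnA addnA.
Qed.

Lemma enc_window s : repunit A (size s) <= enc s < repunit A (size s).+1.
Proof.
elim: s => [|a s IH] /=; first by rewrite /repunit big_geq // big_nat1.
exact: repunit_window_cons (ltn_ord _) IH.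
Qed.

Lemma enc_window_size s l : (repunit A l <= enc s < repunit A l.+1) = (size s == l).
Proof.
apply/idP/eqP => [/andP[le_l lt_l] | <-]; last exact: enc_window.
have /andP[le_s lt_s] := enc_window s.
case: (ltngtP (size s) l) => // [lt_sl | lt_ls].
- by have := leq_trans (leq_repunit A lt_sl) le_l; rewrite leqNgt lt_s.
- by have := leq_trans (leq_repunit A lt_ls) le_s; rewrite leqNgt lt_l.
Qed.

Lemma enc_lt s : enc s < A.+1 ^ size s.
Proof.
elim: s => [|a s IH] //=; have lt_rA : enum_rank a < A := ltn_ord _.
have : A * (enc s).+1 <= A * A.+1 ^ size s by rewrite leq_mul2l IH orbT.
rewrite expnS mulSn mulnS; move: IH lt_rA.
move: (A.+1 ^ size s) (enc s) (enum_rank a : nat) => P e r.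
by move: A => N *; lia.
Qed.

Lemma leq_size_enc s : size s <= enc s.
Proof.
elim: s => [|a s IH] //=; have A_gt0 : 0 < A by apply/card_gt0P; exists a.
by rewrite -addn1 addnC leq_add // (leq_trans IH) // leq_pmull.
Qed.

Lemma enc_suffix p q : enc q <= enc (p ++ q).
Proof.
elim: p => [|a p IH] //=; have A_gt0 : 0 < A by apply/card_gt0P; exists a.
by rewrite (leq_trans IH) // (leq_trans (leq_pmull _ A_gt0)) // leq_addl.
Qed.

Lemma enc_inj : injective enc.
Proof.
elim=> [|a s IH] [|b t] //= eq_enc.
have [/val_inj/enum_rank_inj-> /IH->] // :=
  digits_inj (ltn_ord _) (ltn_ord _) (succn_inj eq_enc).
Qed.

Lemma enc_onto s n : n <= enc s -> exists t, enc t = n.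
Proof.
have [A0 | A_gt0] := posnP A.
  case: s => [|a s]; first by rewrite leqn0 => /eqP ->; exists [::].
  have : 0 < A by apply/card_gt0P; exists a.
  by rewrite A0.
move=> _; elim/ltn_ind: n => -[|m] IH; first by exists [::].
have [t et] := IH (m %/ A) (leq_ltn_trans (leq_div _ _) (ltnSn m)).
exists (enum_val (Ordinal (ltn_pmod m A_gt0)) :: t).
by rewrite /= enum_valK et /= addSn mulnC addnC -divn_eq.
Qed.

End Encoding.

Lemma count_encodings (T : eqType) (f : T -> nat) (Q : T -> Prop) (P : pred nat) C :
  injective f -> (forall x, Q x <-> P (f x)) -> (forall x, Q x -> f x < C) ->
  (forall n, P n -> exists x, f x = n) ->
  exists l, [/\ uniq l, forall x, x \in l <-> Q x & size l = \sum_(0 <= n < C) P n].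
Proof.
move=> f_inj QP Q_lt P_img.
have [l fl] : exists l, map f l = [seq n <- iota 0 C | P n].
  elim: (iota 0 C) => [|n ns [l fl]] /=; first by exists [::].
  case: ifP => Pn; last by exists l.
  by have [x fx] := P_img n Pn; exists (x :: l); rewrite /= fx fl.
exists l; split.
- by rewrite -(map_inj_uniq f_inj) fl filter_uniq ?iota_uniq.
- move=> x; rewrite -(mem_map f_inj) fl mem_filter mem_iota /= QP.
  by split=> [/andP[] // | Pfx]; rewrite Pfx Q_lt // QP.
- by rewrite -(size_map f) fl size_filter -sum1_count big_mkcond /index_iota subn0.
Qed.

Section Growth.
Variable Sigma : finType.
Variable R : seq (seq Sigma * seq Sigma).
Variable s_init : seq Sigma.
Local Notation A := #|Sigma|.

(* The window condition pins down the length [lx] of the prefix x. *)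
Definition rule_step_code (r t : seq Sigma) (u w : nat) : bool :=
  has (fun lx => has (fun x => has (fun y =>
    [&& repunit A lx <= x < repunit A lx.+1,
        u == x + A ^ lx * (enc r + A ^ size r * y) &
        w == x + A ^ lx * (enc t + A ^ size t * y)])
  (iota 0 u.+1)) (iota 0 u.+1)) (iota 0 u.+1).

Lemma rule_step_codeP r t su w :
  reflect (exists sx sy, su = sx ++ r ++ sy /\ w = enc (sx ++ t ++ sy))
          (rule_step_code r t (enc su) w).
Proof.
apply: (iffP idP).
  case/hasP=> lx _ /hasP[x]; rewrite mem_iota ltnS => /andP[_ le_xu].
  case/hasP=> y; rewrite mem_iota ltnS => /andP[_ le_yu] /and3P[x_win /eqP eu /eqP ew].
  have [sx ex] := enc_onto le_xu.
  have [sy ey] := enc_onto le_yu.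
  have size_sx : size sx = lx by apply/eqP; rewrite -enc_window_size ex.
  exists sx, sy; rewrite ew !enc_cat size_sx ex ey; split => //.
  by apply: enc_inj; rewrite eu !enc_cat size_sx ex ey.
move=> [sx [sy [-> ->]]]; set u := enc _.
have le_xu : enc sx <= u by rewrite /u enc_cat leq_addr.
have le_yu : enc sy <= u by rewrite /u catA enc_suffix.
have le_lu : size sx <= u := leq_trans (leq_size_enc sx) le_xu.
apply/hasP; exists (size sx); first by rewrite mem_iota ltnS.
apply/hasP; exists (enc sx); first by rewrite mem_iota ltnS.
apply/hasP; exists (enc sy); first by rewrite mem_iota ltnS.
by rewrite enc_window /u !enc_cat !eqxx.
Qed.

Definition step_code (u w : nat) : bool := has (fun rt => rule_step_code rt.1 rt.2 u w) R.

Lemma step_codeP su w :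
  step_code (enc su) w <-> exists2 sw, w = enc sw & mw_step R su sw.
Proof.
split=> [/hasP[[r t] rt_in /rule_step_codeP[sx [sy [esu ->]]]] |
         [sw -> [r [t [x [y [rt_in [esu esw]]]]]]]].
  by exists (sx ++ t ++ sy) => //; exists r, t, sx, sy.
by apply/hasP; exists (r, t) => //; apply/rule_step_codeP; exists x, y; rewrite esu esw.
Qed.

Definition rhs_max : nat := \max_(rt <- R) size rt.2.

Lemma size_step u v : mw_step R u v -> size v <= size u + rhs_max.
Proof.
move=> [r [t [x [y [rt_in [-> ->]]]]]].
have := @leq_bigmax_seq _ R xpredT (fun rt => size rt.2) _ rt_in isT.
by rewrite -/rhs_max /= !size_cat; lia.
Qed.

Lemma size_reach d s : reach_in R s_init d s -> size s <= size s_init + d * rhs_max.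
Proof.
elim: d s => [s -> | d IH s [u [/IH reach_u /size_step step_u]]]; first by rewrite addn0.
by rewrite mulSn (leq_trans step_u) //; lia.
Qed.

Definition code_bound (d : nat) : nat := A.+1 ^ (size s_init + d * rhs_max).

Lemma enc_reach_lt d s : reach_in R s_init d s -> enc s < code_bound d.
Proof. by move=> /size_reach le_s; rewrite (leq_trans (enc_lt s)) // leq_pexp2l. Qed.

Definition next_mask (j M : nat) : nat :=
  bitmask (code_bound j.+1)
    (fun w => has (fun u => bit M u && step_code u w) (iota 0 (code_bound j))).

Definition reach_mask (d : nat) : nat :=
  iteri d next_mask (bitmask (code_bound 0) (pred1 (enc s_init))).

Lemma reach_maskP d n :
  bit (reach_mask d) n <-> exists2 s, n = enc s & reach_in R s_init d s.
Proof.
elim: d n => [|d IH] n /=; rewrite bit_bitmask.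
  split=> [/andP[_ /eqP->] | [s -> ->]]; first by exists s_init.
  by rewrite (@enc_reach_lt 0) /= ?eqxx.
split=> [/andP[_ /hasP[u _ /andP[/IH[su -> reach_su] /step_codeP[sw -> step]]]] |
         [s -> [su [reach_su step]]]].
  by exists sw => //; exists su.
rewrite (@enc_reach_lt d.+1) /=; last by exists su.
apply/hasP; exists (enc su); first by rewrite mem_iota enc_reach_lt.
by apply/andP; split; [apply/IH; exists su | apply/step_codeP; exists s].
Qed.

Definition at_distance_code (d w : nat) : bool :=
  bit (reach_mask d) w && ~~ has (fun d' => bit (reach_mask d') w) (iota 0 d).

Lemma at_distance_codeP d s : at_distance R s_init d s <-> at_distance_code d (enc s).
Proof.
split=> [[reach_s not_reach] |
         /andP[/reach_maskP[s' /enc_inj <- reach_s] /hasPn not_reach]].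
  apply/andP; split; first by apply/reach_maskP; exists s.
  apply/hasPn => d'; rewrite mem_iota => /andP[_ lt_d'].
  by apply/negP => /reach_maskP[s' /enc_inj <-]; apply: not_reach.
split=> // d' lt_d' reach_d'; have := not_reach d'; rewrite mem_iota lt_d'.
by move=> /(_ isT)/negP; apply; apply/reach_maskP; exists s.
Qed.

Definition growth_count (n : nat) : nat :=
  \sum_(0 <= w < code_bound n.-1) at_distance_code n.-1 w.

Lemma growth_countP n : growth_is R s_init n (growth_count n).
Proof.
apply: count_encodings (@enc_inj Sigma) (at_distance_codeP _) _ _.
  by move=> s [/enc_reach_lt].
by move=> w /andP[/reach_maskP[s -> _] _]; exists s.
Qed.

Lemma expressible_rule_step_code (r t : seq Sigma) u w :
  expressible u -> expressible w ->
  expressible (fun env => rule_step_code r t (u env) (w env)).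
Proof.
move=> Eu Ew; rewrite /rule_step_code.
apply: expressible_has_iota; first exact: expressible_succ Eu.
apply: expressible_has_iota; first exact: expressible_succ (expressible_tail Eu).
have Eu2 := expressible_tail (expressible_tail Eu).
apply: expressible_has_iota; first exact: expressible_succ Eu2.
have Eu3 := expressible_tail (expressible_tail (expressible_tail Eu)).
have Ew3 := expressible_tail (expressible_tail (expressible_tail Ew)).
expressible_closure.
Qed.

Lemma expressible_step_code u w :
  expressible u -> expressible w -> expressible (fun env => step_code (u env) (w env)).
Proof.
move=> Eu Ew; apply: expressible_has => rt _.
exact: expressible_rule_step_code.
Qed.

Lemma expressible_code_bound d :
  expressible d -> expressible (fun env => code_bound (d env)).
Proof. by move=> Ed; rewrite /code_bound; expressible_closure. Qed.

Lemma expressible_reach_mask d :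
  expressible d -> expressible (fun env => reach_mask (d env)).
Proof.
move=> Ed; rewrite /reach_mask /next_mask.
apply: expressible_iter Ed _ _.
- apply: expressible_bitmask; first exact: expressible_code_bound (expressible_cst 0).
  expressible_closure.
- have Ebound := expressible_code_bound (expressible_succ (expressible_var 0)).
  apply: expressible_bitmask Ebound _.
  apply: expressible_has_iota; first exact: expressible_code_bound (expressible_var 1).
  apply: expressible_andb; first by expressible_closure.
  exact: expressible_step_code (expressible_var 0) (expressible_var 1).
Qed.

Lemma expressible_growth_count : expressible (fun env => growth_count (env 0)).
Proof.
have Ed := expressible_pred (expressible_var 0).
rewrite /growth_count; apply: expressible_sum; first exact: expressible_code_bound Ed.
rewrite /at_distance_code; apply: expressible_andb.
  exact: expressible_bit (expressible_reach_mask (expressible_tail Ed)) (expressible_var 0).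
apply/expressible_negb/expressible_has_iota; first exact: expressible_tail Ed.
exact: expressible_bit (expressible_reach_mask (expressible_var 0)) (expressible_var 1).
Qed.

End Growth.

Theorem lemma5 (Sigma : finType) (R : seq (seq Sigma * seq Sigma))
    (s_init : seq Sigma) :
  exists g : nat -> nat,
    prim_rec1 g /\ forall n, 0 < n -> growth_is R s_init n (g n).
Proof.
exists (growth_count R s_init); split; last by move=> n _; exact: growth_countP.
exists (fun v => growth_count R s_init (ext v 0)); split.
  exact: PR_expressible (expressible_growth_count R s_init).
by move=> n; rewrite /ext insubT.
Qed.
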